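(* (Liveness of YAC.) Consider a network of $n = 3f+1$ validating peers running the YAC consensus protocol, of which at most $f$ are faulty (Byzantine), under the standing assumptions listed in the context. Then every correct (valid) client transaction is eventually committed by the honest peers.
   Context: YAC protocol. There are $n=3f+1$ validating peers with a fixed initial ordered list. Rounds $r=1,2,\dots$: in round $r$ the peer processes the $r$-th proposal. The round starts when the peer begins processing the proposal and ends when it commits a block. An Ordering Service (OS) collects client transactions and broadcasts a proposal, an ordered list of transactions, to all peers. Each peer validates the proposal against its local state and discards invalid transactions. From the remaining transactions, the proposal hash and metadata, it forms a block and computes the block hash. A vote is a message containing the pair (proposal hash, block hash) and the peer's signature. Each peer computes a permutation of the peers using a pure function of the block hash and the initial peer list whose output lists are uniformly distributed. It sends its vote to the peers in that order, waiting a fixed delay between sends and cycling through the order repeatedly (vote steps), until it receives a valid commit or reject message. A supermajority is any number greater than two thirds of all peers. A commit message is a set of votes for one block hash signed by a supermajority of peers. A peer that collects a supermajority of votes for one hash broadcasts the commit message and commits the block. A reject message is a set of votes proving that no block hash can reach a supermajority. Commit forwarding: if a peer that has already committed receives a vote for that round, it sends the commit message directly to the voter. An honest peer is one that tries to synchronize with the network, creates valid votes and commits, and never creates forks. Standing assumptions: (i) The OS is itself Byzantine fault tolerant and orders transactions honestly. Every valid client transaction eventually appears in some proposal, and every proposal is delivered to all peers. (ii) Asynchronous environment: every message successfully sent is eventually received. (iii) Hashes and digital signatures are cryptographically secure, and messages cannot be altered or forged by adversaries. (iv) The reject case does not occur; its occurrence is regarded as a violation of the BFT assumption. *)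

From mathcomp Require Import all_boot.
From mathcomp Require Import perm.
From Stdlib Require List.

Set Implicit Arguments.
Unset Strict Implicit.
Unset Printing Implicit Defensive.

Section YAC.

(* n = 3f+1 validating peers, identified with 'I_n (the fixed initial list
   is the enumeration 0,1,...,n-1 of 'I_n). *)
Variable f : nat.
Definition npeers := (3 * f).+1.
Definition peer := 'I_npeers.

Variables (Tx Hash : eqType).

(* A block: proposal hash, metadata (round number and the local ledger, i.e.
   the hashes of the previously committed blocks), and the transactions kept
   after validation. *)
Record block := Block {
  b_ph    : Hash;
  b_round : nat;
  b_prev  : seq Hash;
  b_txs   : seq Tx }.

Record vote := Vote {
  v_round  : nat;
  v_ph     : Hash;
  v_bh     : Hash;
  v_signer : peer }.

Inductive msg :=
  | MVote   of vote
  | MCommit of seq vote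
  | MReject of seq vote.

Definition votes_of (m : msg) : seq vote :=
  match m with MVote v => [:: v] | MCommit vs => vs | MReject vs => vs end.

Definition supermajority (k : nat) : bool := 2 * npeers < 3 * k.

Definition signers (vs : seq vote) : seq peer := undup (map v_signer vs).
Definition signers_for (h : Hash) (vs : seq vote) : seq peer :=
  undup [seq v_signer v | v <- vs & v_bh v == h].

Definition valid_commit (r : nat) (h : Hash) (vs : seq vote) : bool :=
  all (fun v => (v_round v == r) && (v_bh v == h)) vs
  && supermajority (size (signers vs)).

(* reject message for round r: votes proving that no block hash can reach a
   supermajority even if all peers not yet heard from voted for it *)
Definition valid_reject (r : nat) (vs : seq vote) : Prop :=
  all (fun v => v_round v == r) vs /\
  forall h : Hash,
    ~~ supermajority (size (signers_for h vs) + (npeers - size (signers vs))).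

Record yac_system := YACSystem {
  hashP    : seq Tx -> Hash;
  hashB    : block -> Hash;
  validate : seq Hash -> seq Tx -> seq Tx;
      (* validation of a proposal against the local state (ledger) *)
  perm_of  : Hash -> {perm peer};
      (* pure function of the block hash (and the fixed initial list) *)
  delay    : nat;                        (* fixed delay between vote sends *)
  proposal : nat -> seq Tx               (* r-th proposal of the OS *)
}.

(* An execution (global discrete time nat; nothing is assumed about message
   delays except eventual delivery). *)
Record execution := Execution {
  sent      : nat -> peer -> peer -> msg -> Prop; (* time, sender, receiver *)
  recv      : nat -> peer -> msg -> Prop;          (* time, receiver *)
  prop_recv : peer -> nat -> nat;  (* time at which peer gets proposal r *)
  start     : peer -> nat -> option nat;
      (* time at which peer starts round r (begins processing proposal r) *)
  cmt       : peer -> nat -> option (nat * Hash)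
      (* time and block hash of the commit of round r by the peer *)
}.

Variables (S : yac_system) (E : execution).

Definition ledger (p : peer) (r : nat) : seq Hash :=
  pmap (fun k => omap snd (cmt E p k)) (iota 0 r).

Definition formed_block (p : peer) (r : nat) : block :=
  let L := ledger p r in
  Block (hashP S (proposal S r)) r L (validate S L (proposal S r)).

Definition my_vote (p : peer) (r : nat) : vote :=
  Vote r (hashP S (proposal S r)) (hashB S (formed_block p r)) p.

Definition received_commit_before (p : peer) (r : nat) (t : nat) : Prop :=
  exists t' vs h, t' < t /\ recv E t' p (MCommit vs) /\ valid_commit r h vs.
Definition received_reject_before (p : peer) (r : nat) (t : nat) : Prop :=
  exists t' vs, t' < t /\ recv E t' p (MReject vs) /\ valid_reject r vs.
Definition committed_before (p : peer) (r : nat) (t : nat) : Prop :=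
  exists t' h, t' < t /\ cmt E p r = Some (t', h).

Definition hashes_secure : Prop :=
  injective (hashP S) /\ injective (hashB S).

Definition validation_sound (valid : pred Tx) : Prop :=
  forall L P tx, (tx \in validate S L P -> tx \in P) /\
                 (valid tx -> tx \in P -> tx \in validate S L P).

(* (i) the OS: every valid client transaction appears in some proposal
   (delivery of every proposal to every peer is built into prop_recv) *)
Definition os_assumption (valid : pred Tx) (client_tx : Tx -> Prop) : Prop :=
  forall tx, client_tx tx -> valid tx -> exists r, tx \in proposal S r.

Definition async_delivery : Prop :=
  (forall t p q m, sent E t p q m -> exists t', t <= t' /\ recv E t' q m) /\
  (forall t q m, recv E t q m -> exists t' p, t' <= t /\ sent E t' p q m).

(* (iii) signatures cannot be forged: any vote signed by an honest peer that
   occurs in any message is that peer's actual vote of that round *)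
Definition unforgeable (honest : {set peer}) : Prop :=
  forall t p q m v, sent E t p q m -> List.In v (votes_of m) ->
    v_signer v \in honest ->
    v = my_vote (v_signer v) (v_round v) /\
    start E (v_signer v) (v_round v) <> None.

Definition no_reject : Prop :=
  forall t p q vs r, sent E t p q (MReject vs) -> ~ valid_reject r vs.

Definition honest_peer (p : peer) : Prop :=
  (forall r t0, start E p r = Some t0 ->
     prop_recv E p r <= t0 /\
     (r = 0 \/ exists t' h, cmt E p r.-1 = Some (t', h) /\ t' <= t0)) /\
  (forall r, (r = 0 \/ cmt E p r.-1 <> None) -> start E p r <> None) /\
  (forall r t h, cmt E p r = Some (t, h) ->
     exists t0, start E p r = Some t0 /\ t0 <= t) /\
  (forall r t0 k, start E p r = Some t0 ->
     let t := t0 + k * delay S in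
     ~ received_commit_before p r t -> ~ received_reject_before p r t ->
     ~ committed_before p r t ->
     sent E t p (perm_of S (hashB S (formed_block p r)) (inord (k %% npeers)))
          (MVote (my_vote p r))) /\
  (forall r h (sg : seq peer),
     uniq sg -> supermajority (size sg) ->
     (forall s, s \in sg -> exists t v, recv E t p (MVote v) /\
        v_round v = r /\ v_bh v = h /\ v_signer v = s) ->
     start E p r <> None -> exists t, cmt E p r = Some (t, h)) /\
  (forall t r h vs, recv E t p (MCommit vs) -> valid_commit r h vs ->
     start E p r <> None -> exists t', cmt E p r = Some (t', h)) /\
  (forall r t h, cmt E p r = Some (t, h) ->
     exists vs, valid_commit r h vs /\
       ((exists t1, t1 <= t /\ recv E t1 p (MCommit vs)) \/
        ((forall v, List.In v vs ->
            exists t1, t1 <= t /\ recv E t1 p (MVote v)) /\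
         forall q, exists t2, t <= t2 /\ sent E t2 p q (MCommit vs)))) /\
  (forall r t1 h t2 v, cmt E p r = Some (t1, h) -> t1 <= t2 ->
     recv E t2 p (MVote v) -> v_round v = r ->
     exists t3 vs, t2 <= t3 /\ valid_commit r h vs /\
       sent E t3 p (v_signer v) (MCommit vs)).

End YAC.

From Pilot Require Import Defs.
From mathcomp Require Import all_boot.
From mathcomp Require Import perm.
From mathcomp Require Import zify.
From Stdlib Require List.

Set Implicit Arguments.
Unset Strict Implicit.
Unset Printing Implicit Defensive.

(* Liveness follows from safety plus progress, by strong induction on the
   round number r.  Safety: a commit message is signed by a supermajority,
   any two supermajorities share an honest signer, and an honest signature is
   the signer's genuine vote, so all honest commits of round r carry the same
   block hash.  Progress: if every earlier round is committed unanimously, all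
   honest peers hold the same ledger, hence form the same block in round r and
   cast identical votes.  An honest peer that has not committed keeps cycling
   through its permutation and so eventually reaches every peer.  If no honest
   peer committed, one of them would collect the matching votes of all honest
   peers, a supermajority, and commit; once one honest peer has committed,
   commit forwarding answers the votes of the others.  Finally the block
   committed in the round whose proposal contains tx is the block formed by an
   honest signer, and validation keeps the valid tx. *)

Lemma all_In (T : Type) (P : pred T) (s : seq T) (x : T) :
  all P s -> List.In x s -> P x.
Proof.
elim: s => [|y s IHs] //= /andP[Py Ps] [<- | x_s]; [exact: Py | exact: IHs].
Qed.

Lemma mem_map_In (T : Type) (U : eqType) (g : T -> U) (s : seq T) (y : U) :
  y \in map g s -> exists x, List.In x s /\ g x = y.
Proof.
elim: s => [|x s IHs] //=; rewrite in_cons => /orP[/eqP-> | /IHs[z [z_s <-]]].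
- by exists x; split; [left |].
- by exists z; split; [right |].
Qed.

Section Quorums.

Variable f : nat.
Implicit Types A B H : {set peer f}.

Lemma supermajorities_meet A B H :
  supermajority f #|A| -> supermajority f #|B| -> #|~: H| <= f ->
  exists2 q, q \in A :&: B & q \in H.
Proof.
rewrite /supermajority /npeers => smA smB fewH.
have AB_gt_f : f < #|A :&: B|.
  by have := cardsUI A B; have := max_card (A :|: B); rewrite card_ord /npeers; lia.
have /subsetPn[q qAB qH] : ~~ (A :&: B \subset ~: H).
  by apply/negP => /subset_leq_card; move: #|A :&: B| #|~: H| AB_gt_f fewH; lia.
by exists q; rewrite // inE negbK in qH.
Qed.

Lemma honest_supermajority H : #|~: H| <= f -> supermajority f #|H|.
Proof.
move=> fewH; have := cardsC H; rewrite card_ord.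
by move: #|H| #|~: H| fewH; rewrite /supermajority /npeers; lia.
Qed.

Lemma honest_exists H : #|~: H| <= f -> exists p, p \in H.
Proof.
move=> fewH; have smH := honest_supermajority fewH.
by have [p _ pH] := supermajorities_meet smH smH fewH; exists p.
Qed.

End Quorums.

Section CommitMessages.

Variables (f : nat) (Hash : eqType).
Implicit Types vs : seq (vote f Hash).

Lemma valid_commit_supermajority r h vs :
  valid_commit r h vs -> supermajority f #|[set q in signers vs]|.
Proof. by case/andP=> _; rewrite cardsE (card_uniqP (undup_uniq _)). Qed.

Lemma valid_commit_signer r h vs q :
  valid_commit r h vs -> q \in signers vs ->
  exists v, [/\ List.In v vs, v_signer v = q, v_round v = r & v_bh v = h].
Proof.
case/andP=> votes_rh _; rewrite mem_undup => /mem_map_In[v [v_vs v_q]].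
by have /andP[/eqP v_r /eqP v_h] := all_In votes_rh v_vs; exists v.
Qed.

End CommitMessages.

Section Liveness.

Variables (f : nat) (Tx Hash : eqType) (S : yac_system f Tx Hash)
  (E : execution f Hash) (honest : {set peer f}).

Hypothesis few_faulty : #|~: honest| <= f.
Hypothesis honest_behaviour : forall p, p \in honest -> honest_peer S E p.
Hypothesis delay_gt0 : 0 < delay S.
Hypothesis delivery : async_delivery E.
Hypothesis signatures : unforgeable S E honest.
Hypothesis no_rejects : no_reject E.

Let eventually_received := proj1 delivery.
Let received_only_if_sent := proj2 delivery.

Lemma honest_commit_quorum p r t h :
  p \in honest -> cmt E p r = Some (t, h) ->
  exists2 Q : {set peer f}, supermajority f #|Q| &
    {in Q :&: honest, forall q, hashB S (formed_block S E q r) = h}.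
Proof.
move=> p_hon cmt_p.
case: (honest_behaviour p_hon) => _ [_ [_ [_ [_ [_ [justified _]]]]]].
have [vs [vc from_msgs]] := justified _ _ _ cmt_p.
have vote_sent v : List.In v vs ->
    exists t' p' q' m, sent E t' p' q' m /\ List.In v (votes_of m).
  move=> v_vs; case: from_msgs => [[t1 [_ recv_c]] | [recv_votes _]].
    have [t' [p' [_ sent_c]]] := received_only_if_sent recv_c.
    by exists t', p', p, (MCommit vs).
  have [t1 [_ recv_v]] := recv_votes v v_vs.
  have [t' [p' [_ sent_v]]] := received_only_if_sent recv_v.
  by exists t', p', p, (MVote v); split=> //; left.
exists [set q in signers vs]; first exact: valid_commit_supermajority vc.
move=> q; rewrite !inE => /andP[q_sig q_hon].
have [v [v_vs v_q v_r v_h]] := valid_commit_signer vc q_sig.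
have [t' [p' [q' [m [sent_m v_m]]]]] := vote_sent v v_vs.
have signer_hon : v_signer v \in honest by rewrite v_q.
have [v_genuine _] := signatures sent_m v_m signer_hon.
by rewrite -v_h v_genuine v_q v_r.
Qed.

Lemma honest_commits_agree p q r tp tq hp hq :
  p \in honest -> q \in honest ->
  cmt E p r = Some (tp, hp) -> cmt E q r = Some (tq, hq) -> hp = hq.
Proof.
move=> p_hon q_hon cmt_p cmt_q.
have [Qp smp block_p] := honest_commit_quorum p_hon cmt_p.
have [Qq smq block_q] := honest_commit_quorum q_hon cmt_q.
have [s /setIP[sp sq] s_hon] := supermajorities_meet smp smq few_faulty.
by rewrite -(block_p s) ?(block_q s) // inE ?sp ?sq s_hon.
Qed.

Definition decided r :=
  exists h, forall p, p \in honest -> exists t, cmt E p r = Some (t, h).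

Section Round.

Variable r : nat.
Hypothesis earlier_decided : forall k, k < r -> decided k.

Lemma honest_ledgers_agree : {in honest &, forall p q, ledger E p r = ledger E q r}.
Proof.
move=> p q p_hon q_hon; apply: eq_in_pmap => k; rewrite mem_iota => /andP[_ k_r].
have [h dec_k] := earlier_decided k_r.
by have [tp ->] := dec_k p p_hon; have [tq ->] := dec_k q q_hon.
Qed.

Lemma honest_starts_round p : p \in honest -> start E p r <> None.
Proof.
move=> p_hon; case: (honest_behaviour p_hon) => _ [starts _]; apply: starts.
case: r earlier_decided => [|r'] dec; [by left | right].
by have [h /(_ p p_hon)[t ->]] := dec r' (ltnSn r').
Qed.

Lemma undecided_vote_reaches p q T :
  p \in honest -> cmt E p r = None ->
  exists2 t, T <= t & sent E t p q (MVote (my_vote S E p r)).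
Proof.
move=> p_hon no_cmt; have := honest_starts_round p_hon.
case start_p: (start E p r) => [t0|] // _.
case: (honest_behaviour p_hon) => _ [_ [_ [voting [_ [commit_on_msg _]]]]].
pose sig := Defs.perm_of S (hashB S (formed_block S E p r)).
(* The [k]-th send goes to [sig (k mod n)]; this [k] aims at [q] after time [T]. *)
pose k := (sig^-1)%g q + T * npeers f.
have k_mod : k %% npeers f = (sig^-1)%g q by rewrite /k addnC modnMDl modn_small.
exists (t0 + k * delay S).
  have : T <= k by rewrite /k /npeers; nia.
  by have := leq_pmulr k delay_gt0; lia.
have := voting r t0 k start_p; rewrite /= k_mod inord_val permKV; apply.
- case=> [t' [vs [h [_ [recv_c vc]]]]].
  have [t''] := commit_on_msg _ _ _ _ recv_c vc ltac:(by rewrite start_p).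
  by rewrite no_cmt.
- case=> [t' [vs [_ [recv_rej vr]]]].
  have [t'' [p' [_ sent_rej]]] := received_only_if_sent recv_rej.
  exact: no_rejects sent_rej vr.
- by case=> [t' [h [_]]]; rewrite no_cmt.
Qed.

Lemma some_honest_commits : exists2 p, p \in honest & cmt E p r != None.
Proof.
apply/exists_inP; apply: contraT; rewrite negb_exists_in => /forall_inP none.
have no_cmt s : s \in honest -> cmt E s r = None by move/none/negPn/eqP.
have [p0 p0_hon] := honest_exists few_faulty.
case: (honest_behaviour p0_hon) => _ [_ [_ [_ [collect _]]]].
have [|s|t] := collect r (hashB S (formed_block S E p0 r)) (enum honest)
  (enum_uniq _) _ _ (honest_starts_round p0_hon).
- by rewrite -cardE; exact: honest_supermajority.
- rewrite mem_enum => s_hon.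
  have [t1 _ sent_v] := undecided_vote_reaches p0 0 s_hon (no_cmt s s_hon).
  have [t2 [_ recv_v]] := eventually_received sent_v.
  exists t2, (my_vote S E s r); split=> //; split=> //; split=> //.
  by rewrite /my_vote /= /formed_block (honest_ledgers_agree s_hon p0_hon).
- by rewrite no_cmt.
Qed.

Lemma honest_commit_spreads p1 t1 h p :
  p1 \in honest -> cmt E p1 r = Some (t1, h) -> p \in honest ->
  exists t, cmt E p r = Some (t, h).
Proof.
move=> p1_hon cmt_p1 p_hon.
case cmt_p: (cmt E p r) => [[t h']|].
  by exists t; rewrite (honest_commits_agree p_hon p1_hon cmt_p cmt_p1).
case: (honest_behaviour p_hon) => _ [_ [_ [_ [_ [commit_on_msg _]]]]].
case: (honest_behaviour p1_hon) => _ [_ [_ [_ [_ [_ [_ forward]]]]]].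
have [t2 t1_t2 sent_v] := undecided_vote_reaches p1 t1 p_hon cmt_p.
have [t3 [t2_t3 recv_v]] := eventually_received sent_v.
have [t4 [vs [_ [vc sent_c]]]] :=
  forward r t1 h t3 _ cmt_p1 (leq_trans t1_t2 t2_t3) recv_v erefl.
have [t5 [_ recv_c]] := eventually_received sent_c.
have [t6] := commit_on_msg _ _ _ _ recv_c vc (honest_starts_round p_hon).
by rewrite cmt_p.
Qed.

End Round.

Lemma every_round_decided r : decided r.
Proof.
elim/ltn_ind: r => r earlier.
have [p1 p1_hon] := some_honest_commits earlier.
case cmt_p1: (cmt E p1 r) => [[t1 h]|] // _.
by exists h => p; exact: honest_commit_spreads p1_hon cmt_p1.
Qed.

Lemma committed_block_keeps_valid (valid : pred Tx) p r t h tx :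
  validation_sound S valid -> p \in honest -> cmt E p r = Some (t, h) ->
  valid tx -> tx \in proposal S r ->
  exists b, hashB S b = h /\ tx \in b_txs b.
Proof.
move=> sound p_hon cmt_p valid_tx tx_r.
have [Q smQ block_Q] := honest_commit_quorum p_hon cmt_p.
have [q] := supermajorities_meet smQ smQ few_faulty; rewrite setIid => qQ q_hon.
exists (formed_block S E q r); split; first by apply: block_Q; rewrite inE qQ.
exact: (sound _ _ _).2.
Qed.

End Liveness.

Theorem lemma2 (f : nat) (Tx Hash : eqType) (S : yac_system f Tx Hash)
    (E : execution f Hash) (honest : {set peer f})
    (valid : pred Tx) (client_tx : Tx -> Prop) :
  #|~: honest| <= f ->
  (forall p, p \in honest -> honest_peer S E p) ->
  0 < delay S ->
  hashes_secure S ->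
  validation_sound S valid ->
  os_assumption S valid client_tx ->
  async_delivery E ->
  unforgeable S E honest ->
  no_reject E ->
  forall tx, client_tx tx -> valid tx ->
    exists r h,
      (forall p, p \in honest -> exists t, cmt E p r = Some (t, h)) /\
      (exists b, hashB S b = h /\ tx \in b_txs b).
Proof.
move=> few_faulty honest_behaviour delay_gt0 _ sound os delivery signatures
  no_rejects tx client_tx_tx valid_tx.
have [r tx_r] := os tx client_tx_tx valid_tx.
have [h dec_r] := every_round_decided few_faulty honest_behaviour delay_gt0
  delivery signatures no_rejects r.
have [p p_hon] := honest_exists few_faulty.
have [t cmt_p] := dec_r p p_hon.
exists r, h; split=> //.
exact: committed_block_keeps_valid sound p_hon cmt_p valid_tx tx_r.
Qed.
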